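(* Let $H=(V,E,w)$ be a hypergraph with at least one hyperedge, and let $\gamma_1=\min\{D(f): f\in\mathbb{R}^n,\ \sum_v\deg(v)f(v)^2>0\}$, where $D(f)=\frac{\sum_{e\in E}w(e)\big(\max_{u\in e}f(u)+\min_{v\in e}f(v)\big)^2}{\sum_{v\in V}\deg(v)f(v)^2}$. Then there are disjoint sets $L,R\subset V$ with $\mathrm{vol}(L\cup R)>0$ such that $$\beta_H(L,R)\le\sqrt{2\gamma_1}.$$
   Context: A hypergraph $H=(V,E,w)$ has vertex set $V$ with $|V|=n$, hyperedges $E$ (subsets of $V$), weights $w:E\to\mathbb{R}_{>0}$; $\deg(v)=\sum_{e\ni v}w(e)$, $\mathrm{vol}(S)=\sum_{v\in S}\deg(v)$. For $A,B,C\subseteq V$, $w(A,B\mid C)=\sum_{e\in E}w(e)[e\cap A\ne\emptyset\wedge e\cap B\ne\emptyset\wedge e\cap C=\emptyset]$ and $w(A\mid C)=w(A,A\mid C)$. Writing $\overline{X}=V\setminus X$, the bipartiteness ratio of disjoint $L,R$ (with $\mathrm{vol}(L\cup R)>0$) is $\beta_H(L,R)=\frac{2w(L\mid\overline{L})+2w(R\mid\overline{R})+w(L,\overline{L\cup R}\mid R)+w(R,\overline{L\cup R}\mid L)}{\mathrm{vol}(L\cup R)}$. The quantity $\gamma_1$ is the minimum eigenvalue of the paper's hypergraph operator $D_H^{-1}J_H$. *)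

From HB Require Import structures.
From mathcomp Require Import all_boot all_order all_algebra.
From mathcomp Require Import reals.
Set Implicit Arguments. Unset Strict Implicit. Unset Printing Implicit Defensive.
Import Order.TTheory GRing.Theory Num.Theory.
Local Open Scope ring_scope.

Section Hypergraph.
Variables (R : realType) (V : finType) (E : {set {set V}}) (w : {set V} -> R).

Definition hdeg (v : V) : R := \sum_(e in E | v \in e) w e.

Definition hvol (S : {set V}) : R := \sum_(v in S) hdeg v.

Definition hw3 (A B C : {set V}) : R :=
  \sum_(e in E | [&& e :&: A != set0, e :&: B != set0 & e :&: C == set0]) w e.

Definition beta (L Rs : {set V}) : R :=
  (2 * hw3 L L (~: L) + 2 * hw3 Rs Rs (~: Rs)
   + hw3 L (~: (L :|: Rs)) Rs + hw3 Rs (~: (L :|: Rs)) L) / hvol (L :|: Rs).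

(* max / min of f over a (nonempty) hyperedge; value 0 on the empty set
   (never used: hyperedges are assumed nonempty) *)
Definition emax (f : V -> R) (e : {set V}) : R :=
  if [pick u in e] is Some u0 then \big[Num.max/f u0]_(u in e) f u else 0.
Definition emin (f : V -> R) (e : {set V}) : R :=
  if [pick u in e] is Some u0 then \big[Num.min/f u0]_(u in e) f u else 0.

Definition rq_den (f : V -> R) : R := \sum_(v : V) hdeg v * f v ^+ 2.

Definition Dq (f : V -> R) : R :=
  (\sum_(e in E) w e * (emax f e + emin f e) ^+ 2) / rq_den f.

Definition is_gamma1 (g : R) : Prop :=
  (exists f : V -> R, 0 < rq_den f /\ Dq f = g) /\
  (forall f : V -> R, 0 < rq_den f -> g <= Dq f).

End Hypergraph.

(* Threshold rounding of a minimiser f of D.  For a level t > 0 put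
   L_t = [f > 0, f^2 >= t] and R_t = [f < 0, f^2 >= t].  Their signed indicator
   y_t = sg(f) [t <= f^2] is monotone in f, so max_e y_t = y_t(max_e f) and likewise for
   min, and the numerator of beta(L_t, R_t) equals sum_e w(e) |max_e y_t + min_e y_t|.
   Integrating in t over [0, max f^2] (a finite sum over the values of f^2), vol(L_t u R_t)
   integrates to sum_v deg(v) f(v)^2, while an edge with a = max_e f, b = min_e f
   contributes |a|a| + b|b||, which is at most |a + b| sqrt(2 sum_(v in e) f(v)^2).
   By Cauchy-Schwarz the integrated numerator is at most sqrt(2 gamma_1) times the
   integrated volume, so some level t has beta(L_t, R_t) <= sqrt(2 gamma_1). *)

From HB Require Import structures.
From mathcomp Require Import all_boot all_order all_algebra.
From mathcomp Require Import reals.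
From mathcomp Require Import ring lra.
Set Implicit Arguments. Unset Strict Implicit. Unset Printing Implicit Defensive.
Import Order.TTheory GRing.Theory Num.Theory.
Local Open Scope ring_scope.

Section RealFacts.
Variable R : realType.

Lemma cauchy_schwarz_sum (I : Type) (r : seq I) (P : pred I) (B X Y : I -> R) :
  (forall i, P i -> 0 <= X i) -> (forall i, P i -> 0 <= Y i) ->
  (forall i, P i -> B i ^+ 2 <= X i * Y i) ->
  (\sum_(i <- r | P i) B i) ^+ 2 <=
    (\sum_(i <- r | P i) X i) * (\sum_(i <- r | P i) Y i).
Proof.
move=> X0 Y0 BXY.
set b := \sum_(i <- r | P i) B i; set u := \sum_(i <- r | P i) X i.
set v := \sum_(i <- r | P i) Y i.
have u0 : 0 <= u by exact: sumr_ge0.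
have v0 : 0 <= v by exact: sumr_ge0.
(* each [t ^+ 2 * X i - 2 * t * B i + Y i] has a nonpositive discriminant *)
have quad t : 2 * t * b <= t ^+ 2 * u + v.
  rewrite /b /u /v mulr_sumr mulr_sumr -big_split /=; apply: ler_sum => i Pi.
  have := BXY i Pi; have := Y0 i Pi; have [Xi0 Yi0|Xi_neq0 _] := eqVneq (X i) 0.
    rewrite Xi0 mul0r => Bi_le0; suff -> : B i = 0 by lra.
    by apply/eqP; rewrite -sqrf_eq0 eq_le Bi_le0 sqr_ge0.
  have Xi_gt0 : 0 < X i by rewrite lt_def Xi_neq0 X0.
  have := sqr_ge0 (t * X i - B i); nra.
have [u_eq0|u_neq0] := eqVneq u 0.
  have -> : b = 0; last by rewrite u_eq0 expr0n mul0r.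
  apply/eqP/negPn/negP => b0; have := quad ((v + 1) / (2 * b)).
  have -> : 2 * ((v + 1) / (2 * b)) * b = v + 1 by field.
  rewrite u_eq0; lra.
have := quad (b / u); rewrite -(ler_pM2r (_ : 0 < u)) ?lt_def ?u_neq0 //.
have -> : 2 * (b / u) * b * u = 2 * b ^+ 2 by field.
have -> : ((b / u) ^+ 2 * u + v) * u = b ^+ 2 + u * v by field.
lra.
Qed.

Lemma exists_le_ratio (I : eqType) (r : seq I) (lam N D : I -> R) (c : R) :
  {in r, forall i, 0 <= lam i} -> {in r, forall i, 0 <= N i} ->
  {in r, forall i, 0 <= D i} ->
  0 < \sum_(i <- r) lam i * D i ->
  \sum_(i <- r) lam i * N i <= c * \sum_(i <- r) lam i * D i ->
  exists2 i, i \in r & 0 < D i /\ N i <= c * D i.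
Proof.
move=> lam0 N0 D0 sumD_gt0 le_sum.
have [/hasP[i ir /andP[Di NDi]]|/hasPn bad] :=
  boolP (has (fun i => (0 < D i) && (N i <= c * D i)) r); first by exists i.
have D_eq0 i : i \in r -> D i <= 0 -> D i = 0.
  by move=> ir Di_le0; apply: le_anti; rewrite Di_le0 D0.
have lt_cD i : i \in r -> 0 < D i -> c * D i < N i.
  by move=> ir Di; move: (bad i ir); rewrite Di ltNge.
have le_cD i : i \in r -> 0 <= lam i * (N i - c * D i).
  move=> ir; rewrite mulr_ge0 ?lam0 // subr_ge0.
  have [/(lt_cD i ir)/ltW //|/(D_eq0 i ir)->] := ltP 0 (D i).
  by rewrite mulr0 N0.
have : \sum_(i <- r | i \in r) lam i * (N i - c * D i) == 0.
  rewrite eq_le sumr_ge0 // andbT -big_seq.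
  under eq_bigr do rewrite mulrBr mulrCA.
  by rewrite sumrB -mulr_sumr subr_le0.
rewrite psumr_eq0 // => /allP all0.
suff sum0 : \sum_(i <- r) lam i * D i = 0 by move: sumD_gt0; rewrite sum0 ltxx.
rewrite big_seq big1 // => i ir.
have [Di|/(D_eq0 i ir)->] := ltP 0 (D i); last by rewrite mulr0.
move: (all0 i ir); rewrite ir mulf_eq0 subr_eq0 => /orP[/eqP->|/eqP NcD].
  by rewrite mul0r.
by move: (lt_cD i ir Di); rewrite NcD ltxx.
Qed.

Lemma sqr_mul_norm_add_le (a b S : R) : a ^+ 2 <= S -> b ^+ 2 <= S ->
  (a != b -> a ^+ 2 + b ^+ 2 <= S) ->
  (a * `|a| + b * `|b|) ^+ 2 <= (a + b) ^+ 2 * (2 * S).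
Proof.
move=> aS bS abS; have S2 : a ^+ 2 + b ^+ 2 <= 2 * S by lra.
have same_sign : 0 <= a * b -> (a ^+ 2 + b ^+ 2) ^+ 2 <= (a + b) ^+ 2 * (2 * S).
  move=> ab0; apply: le_trans (_ : (a + b) ^+ 2 * (a ^+ 2 + b ^+ 2) <= _).
    by rewrite expr2 ler_wpM2r ?addr_ge0 ?sqr_ge0 //; nra.
  by rewrite ler_wpM2l ?sqr_ge0.
have opp_sign : a * b <= 0 -> (a ^+ 2 - b ^+ 2) ^+ 2 <= (a + b) ^+ 2 * (2 * S).
  move=> ab0; have [<-|/abS {}abS] := eqVneq a b.
    by rewrite subrr expr0n mulr_ge0 ?sqr_ge0 //; nra.
  rewrite (_ : a ^+ 2 - b ^+ 2 = (a + b) * (a - b)); last by ring.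
  by rewrite exprMn ler_wpM2l ?sqr_ge0 //; have := sqr_ge0 (a + b); nra.
have [a0|a0] := leP 0 a; have [b0|b0] := leP 0 b;
  rewrite ?(ger0_norm a0) ?(ltr0_norm a0) ?(ger0_norm b0) ?(ltr0_norm b0).
- by rewrite -!expr2; apply: same_sign; nra.
- by rewrite mulrN -!expr2; apply: opp_sign; nra.
- by rewrite mulrN -!expr2 addrC -opprB sqrrN; apply: opp_sign; nra.
- by rewrite !mulrN -!expr2 -opprD sqrrN; apply: same_sign; nra.
Qed.
End RealFacts.

Section LayerSum.
Variable R : realType.
Implicit Types (z t x : R) (p : seq R) (F G : R -> R).

(* For [z <= p_1 <= p_2 <= ...] this is the Riemann-Stieltjes sum of [F] along the
   steps of [p]; [layer_sum_le_ind] is the layer-cake formula for it. *)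
Definition layer_sum z p F : R :=
  \sum_(st <- zip p (z :: p)) (st.1 - st.2) * F st.1.

Lemma layer_sum_cons z t p F :
  layer_sum z (t :: p) F = (t - z) * F t + layer_sum t p F.
Proof. by rewrite /layer_sum big_cons. Qed.

Lemma eq_layer_sum z p F G : {in p, F =1 G} -> layer_sum z p F = layer_sum z p G.
Proof.
elim: p z => [|t p IH] z FG; first by rewrite /layer_sum !big_nil.
rewrite !layer_sum_cons FG ?mem_head // IH //.
by move=> s sp; rewrite FG // inE sp orbT.
Qed.

Lemma layer_sumD z p F G :
  layer_sum z p (fun t => F t + G t) = layer_sum z p F + layer_sum z p G.
Proof. by rewrite /layer_sum -big_split; apply: eq_bigr => st _; rewrite mulrDr. Qed.

Lemma layer_sumZ z p a F :
  layer_sum z p (fun t => a * F t) = a * layer_sum z p F.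
Proof. by rewrite /layer_sum mulr_sumr; apply: eq_bigr => st _; rewrite mulrCA. Qed.

Lemma layer_sum_sum (I : finType) (P : pred I) z p (F : I -> R -> R) :
  layer_sum z p (fun t => \sum_(i | P i) F i t) = \sum_(i | P i) layer_sum z p (F i).
Proof.
rewrite /layer_sum exchange_big /=; apply: eq_bigr => st _; exact: mulr_sumr.
Qed.

Lemma mem_zip_path z p st : path <=%R z p ->
  st \in zip p (z :: p) -> st.1 \in p /\ st.2 <= st.1.
Proof.
elim: p z => [//|t p IH] z /= /andP[zt tp]; rewrite inE => /orP[/eqP-> //=|].
  by rewrite mem_head.
by case/(IH _ tp) => sp ->; rewrite inE sp orbT.
Qed.

Lemma layer_sum_ge0 z p F : path <=%R z p -> {in p, forall t, 0 <= F t} ->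
  0 <= layer_sum z p F.
Proof.
move=> zp F0; rewrite /layer_sum big_seq sumr_ge0 // => st /(mem_zip_path zp)[sp le_st].
by rewrite mulr_ge0 ?subr_ge0 ?F0.
Qed.

Lemma layer_sum_le_ind0 z p x : path <=%R z p -> x <= z ->
  layer_sum z p (fun t => (t <= x)%R%:R) = 0.
Proof.
elim: p z => [|t p IH] z; first by rewrite /layer_sum big_nil.
move=> /= /andP[zt tp] xz; rewrite layer_sum_cons IH ?(le_trans xz) // addr0.
by case: (lerP t x) => tx; rewrite ?mulr0 // (_ : t = z) ?subrr ?mul0r //; lra.
Qed.

Lemma layer_sum_le_ind z p x : path <=%R z p -> x \in z :: p ->
  layer_sum z p (fun t => (t <= x)%R%:R) = x - z.
Proof.
elim: p z => [|t p IH] z.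
  by move=> _; rewrite inE => /eqP->; rewrite /layer_sum big_nil subrr.
move=> zp; rewrite inE => /orP[/eqP->|xp]; first by rewrite layer_sum_le_ind0 ?subrr.
have /= /andP[zt tp] := zp.
have tx : t <= x.
  by move: xp; rewrite inE => /orP[/eqP->//|]; apply/allP/(order_path_min le_trans tp).
by rewrite layer_sum_cons IH // tx mulr1 addrC subrKA.
Qed.

Lemma exists_layer_le_ratio z p (N D : R -> R) (c : R) : path <=%R z p ->
  {in p, forall t, 0 <= N t} -> {in p, forall t, 0 <= D t} ->
  0 < layer_sum z p D -> layer_sum z p N <= c * layer_sum z p D ->
  exists2 t, t \in p & 0 < D t /\ N t <= c * D t.
Proof.
move=> zp N0 D0 sumD sumND.
have [st /(mem_zip_path zp)[sp _] ?] :
    exists2 st, st \in zip p (z :: p) & 0 < D st.1 /\ N st.1 <= c * D st.1.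
  by apply: exists_le_ratio sumD sumND => st /(mem_zip_path zp)[sp st21];
    rewrite ?subr_ge0 ?N0 ?D0.
by exists st.1.
Qed.

End LayerSum.

Section Sweep.
Variable R : realType.
Implicit Types (t x y : R) (p : seq R).

Definition sweep_sg t x : R := (t <= x ^+ 2)%R%:R * Num.sg x.

Lemma sweep_sgN t x : sweep_sg t (- x) = - sweep_sg t x.
Proof. by rewrite /sweep_sg sqrrN sgrN mulrN. Qed.

Lemma sweep_sg_ge0 t x : 0 <= x -> 0 <= sweep_sg t x.
Proof. by move=> x0; rewrite mulr_ge0 ?sgr_ge0. Qed.

Lemma normr_sweep_sg t x : 0 < t -> `|sweep_sg t x| = (t <= x ^+ 2)%R%:R.
Proof.
move=> t_gt0; rewrite /sweep_sg normrM normr_nat normr_sg; case: lerP => tx.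
  by rewrite -sqrf_eq0 gt_eqF ?(lt_le_trans t_gt0 tx) /= ?mulr1.
by rewrite mul0r.
Qed.

Lemma sweep_sg_mono t : {homo sweep_sg t : x y / x <= y}.
Proof.
have homo_ge0 x y : 0 <= x -> x <= y -> sweep_sg t x <= sweep_sg t y.
  move=> x0 xy; have [->|x_neq0] := eqVneq x 0.
    by rewrite /sweep_sg sgr0 mulr0 sweep_sg_ge0 ?(le_trans x0).
  have x_gt0 : 0 < x by rewrite lt_def x_neq0.
  rewrite /sweep_sg !gtr0_sg ?(lt_le_trans x_gt0) // !mulr1.
  have [tx|] := lerP t (x ^+ 2); last by rewrite ler0n.
  by rewrite (le_trans tx) // ler_sqr ?nnegrE ?(le_trans x0).
move=> x y xy; have [x0|x_lt0] := leP 0 x; first exact: homo_ge0.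
have [y_le0|y0] := leP y 0.
  by have := homo_ge0 (- y) (- x); rewrite !sweep_sgN !lerN2 oppr_ge0; apply.
apply: (@le_trans _ _ 0); last exact/sweep_sg_ge0/ltW.
by rewrite -oppr_ge0 -sweep_sgN sweep_sg_ge0 // oppr_ge0 ltW.
Qed.

Lemma sweep_sgD_ge0 t x y : 0 <= x + y -> 0 <= sweep_sg t x + sweep_sg t y.
Proof.
move=> xy0; have /(sweep_sg_mono t) : - y <= x by lra.
by rewrite sweep_sgN; lra.
Qed.

Lemma layer_sum_sweep_sg p x : path <=%R 0 p -> x ^+ 2 \in 0 :: p ->
  layer_sum 0 p (sweep_sg ^~ x) = x * `|x|.
Proof.
move=> p0 x2p; under eq_layer_sum do rewrite /sweep_sg mulrC.
by rewrite layer_sumZ layer_sum_le_ind // subr0 normrEsg; ring.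
Qed.

Lemma layer_sum_sweep_sgD p x y : path <=%R 0 p ->
  x ^+ 2 \in 0 :: p -> y ^+ 2 \in 0 :: p ->
  layer_sum 0 p (fun t => `|sweep_sg t x + sweep_sg t y|) = `|x * `|x| + y * `|y| |.
Proof.
wlog xy0 : x y / 0 <= x + y => [wlog_xy|] p0 x2p y2p.
  have [|xy_lt0] := leP 0 (x + y); first by move=> xy0; apply: wlog_xy.
  rewrite (@eq_layer_sum _ _ _ _ (fun t => `|sweep_sg t (- x) + sweep_sg t (- y)|)).
    by rewrite wlog_xy ?sqrrN // ?normrN -?opprD ?oppr_ge0 ?ltW // !mulNr -opprD normrN.
  by move=> t _; rewrite !sweep_sgN -opprD normrN.
have sum_ge0 : 0 <= x * `|x| + y * `|y|.
  rewrite -(layer_sum_sweep_sg p0 x2p) -(layer_sum_sweep_sg p0 y2p) -layer_sumD.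
  by apply: layer_sum_ge0 => // t _; apply: sweep_sgD_ge0.
under eq_layer_sum do rewrite ger0_norm ?sweep_sgD_ge0 //.
by rewrite layer_sumD !layer_sum_sweep_sg // [RHS]ger0_norm.
Qed.

End Sweep.

Section EdgeExtrema.
Variables (R : realType) (V : finType).
Implicit Types (f g : V -> R) (e : {set V}).

Lemma emax_ge f e u : u \in e -> f u <= emax f e.
Proof.
move=> ue; rewrite /emax; case: pickP => [u0 _|e0]; last by rewrite e0 in ue.
by rewrite (bigD1 u) //= le_max lexx.
Qed.

Lemma emin_le f e u : u \in e -> emin f e <= f u.
Proof.
move=> ue; rewrite /emin; case: pickP => [u0 _|e0]; last by rewrite e0 in ue.
by rewrite (bigD1 u) //= ge_min lexx.
Qed.

Lemma emax_in f e : e != set0 -> exists2 v, v \in e & emax f e = f v.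
Proof.
case/set0Pn => u ue; rewrite /emax; case: pickP => [u0 u0e|e0]; last by rewrite e0 in ue.
apply: (big_ind (fun x => exists2 v, v \in e & x = f v)) => [|_ _ [v1 ? ->] [v2 ? ->]|v ve].
- by exists u0.
- by case: (leP (f v1) (f v2)); [exists v2|exists v1].
- by exists v.
Qed.

Lemma emin_in f e : e != set0 -> exists2 v, v \in e & emin f e = f v.
Proof.
case/set0Pn => u ue; rewrite /emin; case: pickP => [u0 u0e|e0]; last by rewrite e0 in ue.
apply: (big_ind (fun x => exists2 v, v \in e & x = f v)) => [|_ _ [v1 ? ->] [v2 ? ->]|v ve].
- by exists u0.
- by case: (leP (f v1) (f v2)); [exists v1|exists v2].
- by exists v.
Qed.

Lemma emax_eq f e c : (exists2 v, v \in e & f v = c) -> {in e, forall v, f v <= c} ->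
  emax f e = c.
Proof.
move=> [v ve <-] le_c; have /(emax_in f)[u ue eu] : e != set0 by apply/set0Pn; exists v.
by apply: le_anti; rewrite (emax_ge f ve) eu le_c.
Qed.

Lemma emin_eq f e c : (exists2 v, v \in e & f v = c) -> {in e, forall v, c <= f v} ->
  emin f e = c.
Proof.
move=> [v ve <-] ge_c; have /(emin_in f)[u ue eu] : e != set0 by apply/set0Pn; exists v.
by apply: le_anti; rewrite (emin_le f ve) eu ge_c.
Qed.

Lemma eq_emax f g e : f =1 g -> emax f e = emax g e.
Proof.
by move=> fg; rewrite /emax; case: pickP => // u0 _; rewrite fg; apply: eq_bigr => u _.
Qed.

Lemma eq_emin f g e : f =1 g -> emin f e = emin g e.
Proof.
by move=> fg; rewrite /emin; case: pickP => // u0 _; rewrite fg; apply: eq_bigr => u _.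
Qed.

Lemma eminN f e : e != set0 -> emin f e = - emax (fun v => - f v) e.
Proof.
move=> ne; have [u ue eu] := emin_in f ne.
rewrite eu (@emax_eq _ _ (- f u)) ?opprK //; first by exists u.
by move=> v ve; rewrite lerN2 -eu emin_le.
Qed.

Lemma emax_comp (g : R -> R) f e : {homo g : x y / x <= y} -> e != set0 ->
  emax (fun v => g (f v)) e = g (emax f e).
Proof.
move=> g_mono /(emax_in f)[u ue fu]; apply: emax_eq; first by exists u => //; rewrite fu.
by move=> v ve; apply: g_mono; apply: emax_ge.
Qed.

Lemma emin_comp (g : R -> R) f e : {homo g : x y / x <= y} -> e != set0 ->
  emin (fun v => g (f v)) e = g (emin f e).
Proof.
move=> g_mono /(emin_in f)[u ue fu]; apply: emin_eq; first by exists u => //; rewrite fu.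
by move=> v ve; apply: g_mono; apply: emin_le.
Qed.

Lemma sqr_le_sum_sqr f e u : u \in e -> f u ^+ 2 <= \sum_(v in e) f v ^+ 2.
Proof.
by move=> ue; rewrite (bigD1 u) //= lerDl sumr_ge0 // => v _; apply: sqr_ge0.
Qed.

Lemma sqr_add_le_sum_sqr f e u v : u \in e -> v \in e -> u != v ->
  f u ^+ 2 + f v ^+ 2 <= \sum_(x in e) f x ^+ 2.
Proof.
move=> ue ve uv; rewrite (bigD1 u) //= (bigD1 v) /=; last by rewrite ve eq_sym uv.
by rewrite addrA lerDl sumr_ge0 // => x _; apply: sqr_ge0.
Qed.

Lemma sqr_emax_emin_le f e : e != set0 ->
  (emax f e * `|emax f e| + emin f e * `|emin f e|) ^+ 2 <=
    (emax f e + emin f e) ^+ 2 * (2 * \sum_(v in e) f v ^+ 2).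
Proof.
move=> ne; have [u ue ->] := emax_in f ne; have [v ve ->] := emin_in f ne.
apply: sqr_mul_norm_add_le; rewrite ?sqr_le_sum_sqr // => fuv.
by apply: sqr_add_le_sum_sqr => //; apply: contraNneq fuv => ->.
Qed.

End EdgeExtrema.

Section SignedIndicator.
Variables (R : realType) (V : finType).
Implicit Types (A B C L Rs e : {set V}).

Definition signed_ind L Rs (v : V) : R := (v \in L)%:R - (v \in Rs)%:R.

Lemma signed_indE L Rs v : [disjoint L & Rs] ->
  signed_ind L Rs v = if v \in L then 1 else if v \in Rs then -1 else 0.
Proof.
move=> dLR; rewrite /signed_ind; case vL: (v \in L).
  by rewrite (disjointFr dLR vL) subr0.
by case: (v \in Rs); rewrite /= ?subrr ?sub0r.
Qed.

Lemma emax_signed_ind L Rs e : [disjoint L & Rs] -> e != set0 ->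
  emax (signed_ind L Rs) e =
    if e :&: L != set0 then 1 else if e :&: ~: (L :|: Rs) != set0 then 0 else -1.
Proof.
move=> dLR ne; have yE := signed_indE _ dLR.
case: (boolP (e :&: L != set0)) => [/set0Pn[v /setIP[ve vL]]|/negPn/eqP eL0].
  apply: emax_eq; first by exists v; rewrite ?yE ?vL.
  by move=> u _; rewrite yE; case: ifP => // _; case: ifP => _; lra.
have notL u : u \in e -> u \notin L.
  by move=> ue; apply/negP => uL; have := in_set0 u; rewrite -eL0 inE ue uL.
case: (boolP (e :&: ~: (L :|: Rs) != set0)) => [/set0Pn[v]|/negPn/eqP eO0].
  rewrite !inE => /andP[ve /norP[vL vR]]; apply: emax_eq.
    by exists v; rewrite ?yE ?(negbTE vL) ?(negbTE vR).
  by move=> u ue; rewrite yE (negbTE (notL u ue)); case: ifP => _; lra.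
have inR u : u \in e -> u \in Rs.
  move=> ue; apply: contraTT isT => uR; have := in_set0 u.
  by rewrite -eO0 !inE ue negb_or (notL u ue) uR.
have {}yE u : u \in e -> signed_ind L Rs u = -1.
  by move=> ue; rewrite yE (negbTE (notL u ue)) inR.
apply: emax_eq => [|u /yE-> //]; case/set0Pn: ne => v ve.
by exists v; rewrite ?yE.
Qed.

Lemma emin_signed_ind L Rs e : [disjoint L & Rs] -> e != set0 ->
  emin (signed_ind L Rs) e =
    if e :&: Rs != set0 then -1 else if e :&: ~: (L :|: Rs) != set0 then 0 else 1.
Proof.
move=> dLR ne; rewrite eminN // (@eq_emax _ _ _ (signed_ind Rs L)) => [|v]; last first.
  by rewrite /signed_ind opprB.
have dRL : [disjoint Rs & L] by rewrite disjoint_sym.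
rewrite emax_signed_ind // (setUC Rs L).
by case: (e :&: Rs != set0); case: (e :&: ~: (L :|: Rs) != set0); rewrite ?opprK ?oppr0.
Qed.

Definition meets2_avoids A B C e : bool :=
  [&& e :&: A != set0, e :&: B != set0 & e :&: C == set0].

Definition beta_edge L Rs e : R :=
  2 * (meets2_avoids L L (~: L) e)%:R + 2 * (meets2_avoids Rs Rs (~: Rs) e)%:R
  + (meets2_avoids L (~: (L :|: Rs)) Rs e)%:R + (meets2_avoids Rs (~: (L :|: Rs)) L e)%:R.

Lemma beta_edgeE L Rs e : [disjoint L & Rs] -> e != set0 ->
  beta_edge L Rs e = `|emax (signed_ind L Rs) e + emin (signed_ind L Rs) e|.
Proof.
move=> dLR ne; rewrite emax_signed_ind // emin_signed_ind //.
have avoidC A B : [disjoint A & B] ->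
    (e :&: ~: A == set0) = (e :&: B == set0) && (e :&: ~: (A :|: B) == set0).
  move=> dAB; rewrite -setU_eq0 -setIUr; congr (e :&: _ == set0); apply/setP => v.
  rewrite !inE; case vA: (v \in A); last by case: (v \in B).
  by rewrite (disjointFr dAB vA).
have meets : [|| e :&: L != set0, e :&: Rs != set0 | e :&: ~: (L :|: Rs) != set0].
  apply: contraTT ne; rewrite !negb_or !negbK => /and3P[/eqP eL /eqP eR /eqP eO].
  apply/eqP/setP => v; rewrite in_set0; apply/negbTE/negP => ve.
  have : v \in e :&: L :|: e :&: Rs :|: e :&: ~: (L :|: Rs).
    by rewrite !inE ve; case: (v \in L); case: (v \in Rs).
  by rewrite eL eR eO !set0U inE.
have dRL : [disjoint Rs & L] by rewrite disjoint_sym.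
rewrite /beta_edge /meets2_avoids (avoidC L Rs) // (avoidC Rs L) // (setUC Rs L).
move: meets; case: (e :&: L == set0); case: (e :&: Rs == set0);
  case: (e :&: ~: (L :|: Rs) == set0) => //= _;
  by rewrite ?sub0r ?subrr -?opprD ?normrN ger0_norm; lra.
Qed.

End SignedIndicator.

Arguments signed_ind {R V}.
Arguments beta_edge {R V}.

Section Hypergraph.
Variables (R : realType) (V : finType) (E : {set {set V}}) (w : {set V} -> R).
Hypothesis w_ge0 : forall e, e \in E -> 0 <= w e.
Hypothesis edges_neq0 : forall e, e \in E -> e != set0.
Variable f : V -> R.
Implicit Types (A B C L Rs e : {set V}).

Definition beta_num L Rs : R :=
  2 * hw3 E w L L (~: L) + 2 * hw3 E w Rs Rs (~: Rs)
  + hw3 E w L (~: (L :|: Rs)) Rs + hw3 E w Rs (~: (L :|: Rs)) L.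

Lemma hw3E A B C : hw3 E w A B C = \sum_(e in E) w e * (meets2_avoids A B C e)%:R.
Proof. by rewrite /hw3 big_mkcondr; apply: eq_bigr => e _; rewrite mulr_natr mulrb. Qed.

Lemma beta_numE L Rs : beta_num L Rs = \sum_(e in E) w e * beta_edge L Rs e.
Proof.
rewrite /beta_num !hw3E !mulr_sumr -!big_split; apply: eq_bigr => e _.
by rewrite /beta_edge !mulrDr !(mulrCA (w e) 2).
Qed.

Lemma beta_num_ge0 L Rs : 0 <= beta_num L Rs.
Proof.
by rewrite /beta_num !addr_ge0 ?mulr_ge0 // sumr_ge0 // => e /andP[/w_ge0].
Qed.

Lemma hdeg_ge0 v : 0 <= hdeg E w v.
Proof. by apply: sumr_ge0 => e /andP[/w_ge0]. Qed.

Lemma hvol_signed_ind L Rs : [disjoint L & Rs] ->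
  hvol E w (L :|: Rs) = \sum_v hdeg E w v * `|signed_ind L Rs v|.
Proof.
move=> dLR; rewrite /hvol big_mkcond; apply: eq_bigr => v _.
rewrite signed_indE // inE; case: (v \in L); case: (v \in Rs);
  by rewrite ?normrN ?normr1 ?normr0 ?mulr1 ?mulr0.
Qed.

Lemma rq_den_edges : rq_den E w f = \sum_(e in E) w e * \sum_(v in e) f v ^+ 2.
Proof.
rewrite /rq_den /hdeg; under eq_bigr do rewrite mulr_suml.
under [RHS]eq_bigr do rewrite mulr_sumr.
rewrite (exchange_big_dep (mem E)) /= => [|v e _ /andP[] //].
apply: eq_bigr => e eE; rewrite [RHS]big_mkcond [LHS]big_mkcond /=.
by apply: eq_bigr => v _; rewrite eE.
Qed.

Definition sweepL t := [set v | (0 < f v) && (t <= f v ^+ 2)].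
Definition sweepR t := [set v | (f v < 0) && (t <= f v ^+ 2)].

Lemma disjoint_sweep t : [disjoint sweepL t & sweepR t].
Proof.
rewrite -setI_eq0; apply/eqP/setP => v; rewrite !inE.
by case: (ltrgtP (f v) 0); rewrite ?andbF.
Qed.

Lemma signed_ind_sweep t v : 0 < t ->
  signed_ind (sweepL t) (sweepR t) v = sweep_sg t (f v).
Proof.
move=> t_gt0; rewrite /signed_ind /sweep_sg !inE.
case: (lerP t (f v ^+ 2)) => tf; last by rewrite !andbF mul0r subrr.
rewrite !andbT mul1r; case: (ltrgtP (f v) 0) => [f_lt0|f_gt0|f0].
- by rewrite ltr0_sg // sub0r.
- by rewrite gtr0_sg // subr0.
- by move: tf; rewrite f0 expr0n /= leNgt t_gt0.
Qed.

Definition sweep_levels : seq R :=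
  sort <=%R [seq x <- [seq f v ^+ 2 | v <- enum V] | 0 < x].

Lemma sweep_levels_path : path <=%R 0 sweep_levels.
Proof.
rewrite path_sortedE; last exact: le_trans.
rewrite sort_sorted ?andbT; last exact: le_total.
by apply/allP => t; rewrite mem_sort mem_filter => /andP[/ltW].
Qed.

Lemma sweep_levels_gt0 t : t \in sweep_levels -> 0 < t.
Proof. by rewrite mem_sort mem_filter => /andP[]. Qed.

Lemma sqr_in_sweep_levels v : f v ^+ 2 \in 0 :: sweep_levels.
Proof.
rewrite inE mem_sort mem_filter (map_f (fun u => f u ^+ 2)) ?mem_enum // andbT.
by rewrite lt_def sqr_ge0 andbT orbN.
Qed.

Lemma layer_sum_hvol :
  layer_sum 0 sweep_levels (fun t => hvol E w (sweepL t :|: sweepR t)) = rq_den E w f.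
Proof.
rewrite (@eq_layer_sum _ _ _ _ (fun t => \sum_v hdeg E w v * (t <= f v ^+ 2)%R%:R)).
  rewrite layer_sum_sum; apply: eq_bigr => v _.
  by rewrite layer_sumZ layer_sum_le_ind ?subr0 ?sweep_levels_path ?sqr_in_sweep_levels.
move=> t /sweep_levels_gt0 t_gt0; rewrite hvol_signed_ind ?disjoint_sweep //.
by apply: eq_bigr => v _; rewrite signed_ind_sweep // normr_sweep_sg.
Qed.

Lemma layer_sum_beta_num :
  layer_sum 0 sweep_levels (fun t => beta_num (sweepL t) (sweepR t)) =
  \sum_(e in E) w e * `|emax f e * `|emax f e| + emin f e * `|emin f e| |.
Proof.
rewrite (@eq_layer_sum _ _ _ _ (fun t => \sum_(e in E)
    w e * `|sweep_sg t (emax f e) + sweep_sg t (emin f e)|)).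
  rewrite layer_sum_sum; apply: eq_bigr => e eE; rewrite layer_sumZ.
  have [u _ ->] := emax_in f (edges_neq0 eE); have [v _ ->] := emin_in f (edges_neq0 eE).
  by rewrite layer_sum_sweep_sgD ?sweep_levels_path ?sqr_in_sweep_levels.
move=> t /sweep_levels_gt0 t_gt0; rewrite beta_numE; apply: eq_bigr => e eE.
rewrite beta_edgeE ?disjoint_sweep ?edges_neq0 //.
have yE v : signed_ind (sweepL t) (sweepR t) v = sweep_sg t (f v).
  exact: signed_ind_sweep.
rewrite (eq_emax _ yE) (eq_emin _ yE).
by rewrite emax_comp ?emin_comp ?edges_neq0 //; apply: sweep_sg_mono.
Qed.

Lemma sweep_cost_le : 0 < rq_den E w f ->
  \sum_(e in E) w e * `|emax f e * `|emax f e| + emin f e * `|emin f e| | <=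
    Num.sqrt (2 * Dq E w f) * rq_den E w f.
Proof.
set d := rq_den E w f; move=> d_gt0.
have num_eq : \sum_(e in E) w e * (emax f e + emin f e) ^+ 2 = Dq E w f * d.
  by rewrite /Dq divfK ?gt_eqF.
have Dq_ge0 : 0 <= Dq E w f.
  rewrite -(pmulr_lge0 _ d_gt0) -num_eq sumr_ge0 // => e eE.
  by rewrite mulr_ge0 ?w_ge0 ?sqr_ge0.
have sum_Y : \sum_(e in E) w e * (2 * \sum_(v in e) f v ^+ 2) = 2 * d.
  by rewrite /d rq_den_edges mulr_sumr; apply: eq_bigr => e _; rewrite mulrCA.
have X0 e : e \in E -> 0 <= w e * (emax f e + emin f e) ^+ 2.
  by move=> eE; rewrite mulr_ge0 ?w_ge0 ?sqr_ge0.
have Y0 e : e \in E -> 0 <= w e * (2 * \sum_(v in e) f v ^+ 2).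
  by move=> eE; rewrite !mulr_ge0 ?w_ge0 ?sumr_ge0 // => v _; rewrite sqr_ge0.
have BXY e : e \in E ->
    (w e * `|emax f e * `|emax f e| + emin f e * `|emin f e| |) ^+ 2 <=
    w e * (emax f e + emin f e) ^+ 2 * (w e * (2 * \sum_(v in e) f v ^+ 2)).
  move=> eE; rewrite mulrACA -expr2 exprMn real_normK ?num_real //.
  by rewrite ler_wpM2l ?sqr_ge0 // sqr_emax_emin_le ?edges_neq0.
have := @cauchy_schwarz_sum _ _ (index_enum _) (fun e => e \in E) _ _ _ X0 Y0 BXY.
rewrite num_eq sum_Y => CS.
rewrite -ler_sqr ?nnegrE ?mulr_ge0 ?sqrtr_ge0 ?(ltW d_gt0) //; last first.
  by rewrite sumr_ge0 // => e eE; rewrite mulr_ge0 ?w_ge0.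
rewrite exprMn sqr_sqrtr ?(mulr_ge0 (ler0n _ 2) Dq_ge0) //.
by rewrite (_ : _ * d ^+ 2 = Dq E w f * d * (2 * d)) //; ring.
Qed.

End Hypergraph.

Unset Implicit Arguments.

Theorem theorem4 (R : realType) (V : finType) (E : {set {set V}}) (w : {set V} -> R)
  (hw : forall e, e \in E -> 0 < w e)
  (hne : forall e, e \in E -> e != set0)
  (hE : E != set0)
  (gamma1 : R) (hg : is_gamma1 E w gamma1) :
  exists L Rs : {set V},
    [/\ [disjoint L & Rs], 0 < hvol E w (L :|: Rs)
      & beta E w L Rs <= Num.sqrt (2 * gamma1)].
Proof.
have [[f [den_gt0 <-]] _] := hg.
have w_ge0 e : e \in E -> 0 <= w e by move/hw/ltW.
have vol_ge0 S : 0 <= hvol E w S by apply: sumr_ge0 => v _; apply: hdeg_ge0.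
have [t _ [vol_gt0 le_beta]] : exists2 t, t \in sweep_levels f &
    0 < hvol E w (sweepL f t :|: sweepR f t) /\
    beta_num E w (sweepL f t) (sweepR f t) <=
      Num.sqrt (2 * Dq E w f) * hvol E w (sweepL f t :|: sweepR f t).
  apply: exists_layer_le_ratio (sweep_levels_path f) _ _ _ _ => [t _|t _||].
  - exact: beta_num_ge0.
  - exact: vol_ge0.
  - by rewrite layer_sum_hvol.
  - by rewrite layer_sum_beta_num ?layer_sum_hvol //; apply: sweep_cost_le.
exists (sweepL f t), (sweepR f t); split => //; first exact: disjoint_sweep.
by rewrite /beta ler_pdivrMr // mulrC.
Qed.
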